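(* Let $k\ge 1$ and let $P(n)=\sum_{i=0}^k\alpha_i n^i$ be a polynomial of degree $k$ with real coefficients. Let $q,R,h$ be positive integers and $p$ an integer such that \[\gcd(p,q)=1,\qquad \Bigl|\alpha_k-\frac pq\Bigr|\le\frac1{q^2},\qquad 2h\,k!\,R^{2-1/2^{k-2}}\le q.\] Then for every integer $N\ge R$, \[\frac1N\Bigl|\sum_{1\le n\le N}e(hP(n))\Bigr|\le C_k\Bigl(\frac1R+\frac qN\Bigr)^{1/2^{k-1}},\] where $C_k$ is a constant depending only on $k$.
   Context: $e(u)=\exp(2\pi i u)$ for real $u$. *)

From Stdlib Require Import Reals ZArith.
From Coquelicot Require Import Coquelicot.
Open Scope R_scope.

Definition e (u : R) : C := (cos (2 * PI * u), sin (2 * PI * u)).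

Fixpoint expsum (f : nat -> R) (N : nat) : C :=
  match N with
  | O => 0%C
  | S m => Cplus (expsum f m) (e (f (S m)))
  end.

Definition poly_eval (alpha : nat -> R) (k : nat) (n : nat) : R :=
  sum_f_R0 (fun i => alpha i * INR n ^ i) k.

(* Averaging S = sum_(n < N) e(g n) over H shifts of n and applying
   Cauchy-Schwarz bounds (|S|/N)^2 by 2/H + 8 (H/N)^2 plus twice the mean, over pairs r, s < H
   with r <> s, of |sum_n e(g(n + r) - g(n + s))| / N; the differenced phase has degree one less.
   After raising to the power 2^j, Jensen's inequality for that mean lets the estimate iterate:
   k - 1 steps with lengths H_1, ..., H_(k-1) reduce h P to linear phases with slopes h m alpha_k,
   1 <= m <= k! H_1 ... H_(k-1).  When 2 h m <= q, coprimality of p and q together with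
   |alpha_k - p/q| <= 1/q^2 put h m alpha_k at distance >= 1/(2q) from the integers, so each
   linear sum is a geometric series of modulus <= 2q.  Finally the lengths floor(R^(1/2^e)),
   0 <= e < k - 1, make every error term H^(-2^e) O(1/R), while their product is at most
   R^(2 - 1/2^(k-2)), which is what the hypothesis on q absorbs. *)

From Stdlib Require Import Reals ZArith Lra Lia List.
From Coquelicot Require Import Coquelicot.
Open Scope R_scope.

Fixpoint rsum (f : nat -> R) (L : nat) : R :=
  match L with O => 0 | S m => rsum f m + f m end.

Fixpoint csum (z : nat -> C) (L : nat) : C :=
  match L with O => 0%C | S m => Cplus (csum z m) (z m) end.

Lemma rsum_ext f g L : (forall n, (n < L)%nat -> f n = g n) -> rsum f L = rsum g L.
Proof. induction L; simpl; intros E; auto. rewrite IHL, E; auto. Qed.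

Lemma rsum_plus f g L : rsum (fun n => f n + g n) L = rsum f L + rsum g L.
Proof. induction L; simpl; [lra | rewrite IHL; lra]. Qed.

Lemma rsum_scal c f L : rsum (fun n => c * f n) L = c * rsum f L.
Proof. induction L; simpl; [lra | rewrite IHL; lra]. Qed.

Lemma rsum_const c L : rsum (fun _ => c) L = c * INR L.
Proof. induction L; simpl rsum; [simpl; lra | rewrite IHL, S_INR; lra]. Qed.

Lemma rsum_le f g L : (forall n, (n < L)%nat -> f n <= g n) -> rsum f L <= rsum g L.
Proof.
  induction L; simpl; intros Hfg; [lra |].
  apply Rplus_le_compat; auto.
Qed.

Lemma rsum_nonneg f L : (forall n, (n < L)%nat -> 0 <= f n) -> 0 <= rsum f L.
Proof. intros. rewrite <- (Rmult_0_l (INR L)), <- rsum_const. apply rsum_le; auto. Qed.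

Lemma rsum_swap (F : nat -> nat -> R) a b :
  rsum (fun i => rsum (F i) b) a = rsum (fun j => rsum (fun i => F i j) a) b.
Proof.
  induction a; simpl.
  - rewrite rsum_const; lra.
  - rewrite IHa, <- rsum_plus. reflexivity.
Qed.

Lemma rsum_mul f g a b : rsum f a * rsum g b = rsum (fun i => rsum (fun j => f i * g j) b) a.
Proof. induction a; simpl; [lra |]. rewrite Rmult_plus_distr_r, IHa, rsum_scal. reflexivity. Qed.

Lemma csum_ext f g L : (forall n, (n < L)%nat -> f n = g n) -> csum f L = csum g L.
Proof. induction L; simpl; intros E; auto. rewrite IHL, E; auto. Qed.

Lemma re_csum z L : Re (csum z L) = rsum (fun n => Re (z n)) L.
Proof. induction L; simpl; auto. rewrite <- IHL. reflexivity. Qed.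

Lemma im_csum z L : Im (csum z L) = rsum (fun n => Im (z n)) L.
Proof. induction L; simpl; auto. rewrite <- IHL. reflexivity. Qed.

Lemma csum_plus f g L : csum (fun n => f n + g n)%C L = (csum f L + csum g L)%C.
Proof. induction L; simpl; [ring | rewrite IHL; ring]. Qed.

Lemma csum_const z L : csum (fun _ => z) L = (INR L * z)%C.
Proof.
  induction L; simpl csum.
  - simpl. rewrite Cmult_0_l. reflexivity.
  - rewrite IHL, S_INR, RtoC_plus. ring.
Qed.

Lemma csum_split z a b : csum z (a + b) = (csum z a + csum (fun n => z (n + a)%nat) b)%C.
Proof.
  induction b; simpl.
  - rewrite Nat.add_0_r, Cplus_0_r. reflexivity.
  - rewrite Nat.add_succ_r. simpl. rewrite IHb, (Nat.add_comm b a). ring.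
Qed.

Lemma csum_conj z L : Cconj (csum z L) = csum (fun n => Cconj (z n)) L.
Proof.
  induction L; simpl.
  - apply injective_projections; simpl; lra.
  - rewrite Cplus_conj, IHL. reflexivity.
Qed.

Lemma Cmod_csum_le z L : Cmod (csum z L) <= rsum (fun n => Cmod (z n)) L.
Proof.
  induction L; simpl.
  - rewrite Cmod_0. lra.
  - eapply Rle_trans; [apply Cmod_triangle | lra].
Qed.

Lemma csum_swap (F : nat -> nat -> C) a b :
  csum (fun i => csum (F i) b) a = csum (fun j => csum (fun i => F i j) a) b.
Proof.
  induction a; simpl.
  - rewrite csum_const, Cmult_0_r. reflexivity.
  - rewrite IHa, <- csum_plus. reflexivity.
Qed.

Lemma rsum_sq_le x n : (rsum x n) ^ 2 <= INR n * rsum (fun i => x i ^ 2) n.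
Proof.
  destruct n as [|n']; [simpl; lra |].
  set (N := INR (S n')). set (s := rsum x (S n')). set (Q := rsum (fun i => x i ^ 2) (S n')).
  assert (HN : 0 < N) by (apply lt_0_INR; lia).
  set (m := s / N).
  assert (Hvar : 0 <= rsum (fun i => (x i - m) ^ 2) (S n'))
    by (apply rsum_nonneg; intros; apply pow2_ge_0).
  rewrite (rsum_ext _ (fun i => x i ^ 2 + (- 2 * m * x i + m ^ 2))) in Hvar
    by (intros; ring).
  rewrite rsum_plus, rsum_plus, rsum_scal, rsum_const in Hvar. fold N s Q in Hvar.
  unfold m in Hvar.
  apply Rmult_le_reg_r with (/ N); [apply Rinv_0_lt_compat; lra |].
  replace (N * Q * / N) with Q by (field; lra).
  replace (s ^ 2 * / N) with (- (- 2 * (s / N) * s + (s / N) ^ 2 * N)) by (field; lra).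
  lra.
Qed.

Lemma power_mean j x n : (forall i, (i < n)%nat -> 0 <= x i) ->
  (rsum x n) ^ (2 ^ j) <= INR n ^ (2 ^ j - 1) * rsum (fun i => x i ^ (2 ^ j)) n.
Proof.
  intros Hx. induction j as [|j IH].
  - simpl. rewrite Rmult_1_l, Rmult_1_r. right. apply rsum_ext. intros. ring.
  - set (p := (2 ^ j)%nat) in IH.
    assert (Hp : (1 <= p)%nat) by (pose proof (Nat.pow_nonzero 2 j); unfold p; lia).
    replace (2 ^ S j)%nat with (p * 2)%nat by (unfold p; rewrite Nat.pow_succ_r'; lia).
    assert (Hs : 0 <= rsum x n ^ p) by (apply pow_le, rsum_nonneg; auto).
    rewrite pow_mult.
    eapply Rle_trans; [apply pow_incr; split; [exact Hs | exact IH] |].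
    rewrite Rpow_mult_distr.
    eapply Rle_trans.
    { apply Rmult_le_compat_l; [apply pow_le, pow_le, pos_INR | apply rsum_sq_le]. }
    replace (p * 2 - 1)%nat with ((p - 1) * 2 + 1)%nat by lia.
    rewrite pow_add, pow_mult, pow_1, Rmult_assoc. right. do 2 f_equal.
    apply rsum_ext; intros. rewrite <- pow_mult. reflexivity.
Qed.

Lemma rsum_pow_le j x n Y : (forall i, (i < n)%nat -> 0 <= x i /\ x i ^ (2 ^ j) <= Y) ->
  (rsum x n) ^ (2 ^ j) <= INR n ^ (2 ^ j) * Y.
Proof.
  intros Hx.
  eapply Rle_trans; [apply power_mean; intros i Hi; apply Hx, Hi |].
  eapply Rle_trans.
  { apply Rmult_le_compat_l; [apply pow_le, pos_INR |].
    apply (rsum_le _ (fun _ => Y)). intros i Hi. apply Hx, Hi. }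
  rewrite rsum_const. pose proof (Nat.pow_nonzero 2 j).
  replace (2 ^ j)%nat with (S (2 ^ j - 1)) at 2 by lia.
  right. simpl. ring.
Qed.

Lemma pow_sum3_le j a b c : 0 <= a -> 0 <= b -> 0 <= c ->
  (a + b + c) ^ (2 ^ j) <= 3 ^ (2 ^ j - 1) * (a ^ (2 ^ j) + b ^ (2 ^ j) + c ^ (2 ^ j)).
Proof.
  intros Ha Hb Hc.
  set (x := fun i => match i with O => a | 1%nat => b | _ => c end).
  assert (Hx : forall i, (i < 3)%nat -> 0 <= x i) by (intros [|[|i]] _; simpl; auto).
  generalize (power_mean j x 3 Hx). simpl rsum. unfold x.
  replace (INR 3) with 3 by (simpl; lra). rewrite !Rplus_0_l. auto.
Qed.

Lemma Cmod_e x : Cmod (e x) = 1.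
Proof.
  unfold Cmod, e; simpl. rewrite !Rmult_1_r.
  pose proof (sin2_cos2 (2 * PI * x)) as E. unfold Rsqr in E.
  rewrite Rplus_comm, E. apply sqrt_1.
Qed.

Lemma e_opp x : e (- x) = Cconj (e x).
Proof.
  unfold e, Cconj. simpl. replace (2 * PI * - x) with (- (2 * PI * x)) by ring.
  rewrite cos_neg, sin_neg. reflexivity.
Qed.

Lemma e_add x y : (e x * e y)%C = e (x + y).
Proof.
  unfold e, Cmult. simpl. replace (2 * PI * (x + y)) with (2 * PI * x + 2 * PI * y) by ring.
  rewrite cos_plus, sin_plus. apply injective_projections; simpl; ring.
Qed.

Definition esum (g : nat -> R) (L : nat) : C := csum (fun n => e (g n)) L.

Lemma expsum_esum f N : expsum f N = esum (fun n => f (S n)) N.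
Proof. induction N; simpl; auto. rewrite IHN. reflexivity. Qed.

Lemma esum_ext f g L : (forall n, f n = g n) -> esum f L = esum g L.
Proof. intros E. apply csum_ext. intros; rewrite E; auto. Qed.

Lemma re_esum g L : Re (esum g L) = rsum (fun n => cos (2 * PI * g n)) L.
Proof. apply re_csum. Qed.

Lemma Cmod_esum_le g L : Cmod (esum g L) <= INR L.
Proof.
  eapply Rle_trans; [apply Cmod_csum_le |].
  rewrite <- (Rmult_1_l (INR L)), <- rsum_const.
  apply rsum_le. intros; rewrite Cmod_e; lra.
Qed.

Lemma Cmod_esum_opp g L : Cmod (esum (fun n => - g n) L) = Cmod (esum g L).
Proof.
  unfold esum. rewrite <- Cmod_conj, csum_conj.
  f_equal. apply csum_ext. intros. rewrite e_opp, Cconj_conj. reflexivity.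
Qed.

Lemma Cmod_esum_sub_shift g L r :
  Cmod (esum g L - esum (fun n => g (n + r)%nat) L)%C <= 2 * INR r.
Proof.
  assert (E : (esum g L - esum (fun n => g (n + r)%nat) L
               = esum g r - esum (fun n => g (n + L)%nat) r)%C).
  { pose proof (csum_split (fun n => e (g n)) r L) as Er.
    pose proof (csum_split (fun n => e (g n)) L r) as EL. rewrite Nat.add_comm in EL.
    unfold esum.
    transitivity (csum (fun n => e (g n)) L + csum (fun n => e (g (n + L)%nat)) r
                  - csum (fun n => e (g (n + r)%nat)) L - csum (fun n => e (g (n + L)%nat)) r)%C;
      [ring |].
    rewrite <- EL, Er. ring. }
  rewrite E. unfold Cminus.
  eapply Rle_trans; [apply Cmod_triangle |]. rewrite Cmod_opp.
  pose proof (Cmod_esum_le g r). pose proof (Cmod_esum_le (fun n => g (n + L)%nat) r). lra.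
Qed.

Lemma Cmod_csum_sq_le z L : Cmod (csum z L) ^ 2 <= INR L * rsum (fun n => Cmod (z n) ^ 2) L.
Proof.
  eapply Rle_trans; [| apply rsum_sq_le].
  apply pow_incr. split; [apply Cmod_ge_0 | apply Cmod_csum_le].
Qed.

Lemma rsum_delta H r : (r < H)%nat -> rsum (fun s => if Nat.eq_dec r s then 1 else 0) H = 1.
Proof.
  induction H as [|H IH]; intros Hr; [lia |]. cbn [rsum].
  destruct (Nat.eq_dec r H) as [<- | Hne].
  - rewrite (rsum_ext _ (fun _ => 0)), rsum_const; [lra |].
    intros n Hn. destruct (Nat.eq_dec r n); [lia | auto].
  - rewrite IH by lia. lra.
Qed.

Definition offdiag_esum (g : nat -> R) (L r s : nat) : R :=
  if Nat.eq_dec r s then 0 else Cmod (esum (fun n => g (n + r)%nat - g (n + s)%nat) L).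

Section WeylDifferencing.

Variables (g : nat -> R) (L H : nat).

(* H * S is, up to 2 H^2, the sum over n of the blocks W n of H consecutive terms. *)
Let W n := csum (fun r => e (g (n + r)%nat)) H.

Lemma shift_average_bound : INR H * Cmod (esum g L) <= Cmod (csum W L) + 2 * INR H ^ 2.
Proof.
  set (D := csum (fun r => esum g L - esum (fun n => g (n + r)%nat) L)%C H).
  assert (E : (INR H * esum g L)%C = (csum W L + D)%C).
  { rewrite <- csum_const. unfold W, D.
    rewrite (csum_swap (fun n r => e (g (n + r)%nat))), <- csum_plus.
    apply csum_ext. intros. unfold esum. ring. }
  replace (INR H * Cmod (esum g L)) with (Cmod (INR H * esum g L)%C)
    by (rewrite Cmod_mult, Cmod_R, Rabs_pos_eq; auto using pos_INR).
  rewrite E.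
  eapply Rle_trans; [apply Cmod_triangle |]. apply Rplus_le_compat_l.
  eapply Rle_trans; [apply Cmod_csum_le |].
  replace (2 * INR H ^ 2) with (rsum (fun _ => 2 * INR H) H) by (rewrite rsum_const; ring).
  apply rsum_le. intros r Hr.
  eapply Rle_trans; [apply Cmod_esum_sub_shift |]. apply lt_INR in Hr. lra.
Qed.

Lemma Cmod_W_sq n : Cmod (W n) ^ 2 =
  rsum (fun r => rsum (fun s => cos (2 * PI * (g (n + r)%nat - g (n + s)%nat))) H) H.
Proof.
  rewrite Cmod2_alt. unfold W. rewrite re_csum, im_csum, <- !Rsqr_pow2.
  unfold Rsqr. rewrite !rsum_mul, <- rsum_plus. apply rsum_ext; intros r _.
  rewrite <- rsum_plus. apply rsum_ext; intros s _. simpl.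
  rewrite Rmult_minus_distr_l, cos_minus. ring.
Qed.

Lemma rsum_Cmod_W_sq_le :
  rsum (fun n => Cmod (W n) ^ 2) L <=
  INR H * INR L + rsum (fun r => rsum (offdiag_esum g L r) H) H.
Proof.
  rewrite (rsum_ext _ _ _ (fun n _ => Cmod_W_sq n)), rsum_swap.
  replace (INR H * INR L) with (rsum (fun _ => INR L) H) by (rewrite rsum_const; ring).
  rewrite <- rsum_plus. apply rsum_le. intros r Hr.
  rewrite rsum_swap, <- (Rmult_1_r (INR L)), <- (rsum_delta H r Hr), <- rsum_scal, <- rsum_plus.
  apply rsum_le. intros s _.
  rewrite <- re_esum. unfold offdiag_esum. destruct (Nat.eq_dec r s) as [<- | _].
  - rewrite (esum_ext _ (fun _ => 0)) by (intros; ring).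
    rewrite re_esum, (rsum_ext _ (fun _ => 1)), rsum_const by (intros; rewrite Rmult_0_r; apply cos_0).
    lra.
  - pose proof (Rle_abs (Re (esum (fun n => g (n + r)%nat - g (n + s)%nat) L))).
    pose proof (re_le_Cmod (esum (fun n => g (n + r)%nat - g (n + s)%nat) L)). lra.
Qed.

Lemma weyl_differencing : (1 <= H)%nat ->
  Cmod (esum g L) ^ 2 <= 2 * INR L ^ 2 / INR H
    + 2 * INR L / INR H ^ 2 * rsum (fun r => rsum (offdiag_esum g L r) H) H + 8 * INR H ^ 2.
Proof.
  intros HH. assert (HHr : 1 <= INR H) by (apply (le_INR 1); auto).
  set (Off := rsum (fun r => rsum (offdiag_esum g L r) H) H).
  set (A := Cmod (csum W L)).
  assert (HA : A ^ 2 <= INR L * (INR H * INR L + Off)).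
  { eapply Rle_trans; [apply Cmod_csum_sq_le |].
    apply Rmult_le_compat_l; [apply pos_INR | apply rsum_Cmod_W_sq_le]. }
  assert (HT : (INR H * Cmod (esum g L)) ^ 2 <= 2 * A ^ 2 + 8 * INR H ^ 4).
  { pose proof (shift_average_bound) as Hs. fold A in Hs.
    pose proof (Cmod_ge_0 (esum g L)). pose proof (Cmod_ge_0 (csum W L)).
    eapply Rle_trans; [apply pow_incr; split; [nra | exact Hs] |].
    pose proof (pow2_ge_0 (A - 2 * INR H ^ 2)). nra. }
  apply Rmult_le_reg_l with (INR H ^ 2); [nra |].
  rewrite Rpow_mult_distr in HT. eapply Rle_trans; [exact HT |].
  replace (INR H ^ 2 * (2 * INR L ^ 2 / INR H + 2 * INR L / INR H ^ 2 * Off + 8 * INR H ^ 2))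
    with (2 * (INR L * (INR H * INR L + Off)) + 8 * INR H ^ 4) by (field; lra).
  lra.
Qed.

End WeylDifferencing.

Lemma weyl_differencing_normalized g L H N : (1 <= H)%nat -> (L <= N)%nat -> (1 <= N)%nat ->
  (Cmod (esum g L) / INR N) ^ 2 <= 2 / INR H
    + 2 * (rsum (fun r => rsum (fun s => offdiag_esum g L r s / INR N) H) H / INR H ^ 2)
    + 8 * (INR H / INR N) ^ 2.
Proof.
  intros HH HL HN.
  assert (HHr : 1 <= INR H) by (apply (le_INR 1); auto).
  assert (HNr : 1 <= INR N) by (apply (le_INR 1); auto).
  assert (HLr : 0 <= INR L <= INR N) by (split; [apply pos_INR | apply le_INR; auto]).
  set (Off := rsum (fun r => rsum (offdiag_esum g L r) H) H).
  assert (HOff : 0 <= Off).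
  { apply rsum_nonneg; intros r _; apply rsum_nonneg; intros s _.
    unfold offdiag_esum. destruct Nat.eq_dec; [lra | apply Cmod_ge_0]. }
  replace (rsum (fun r => rsum (fun s => offdiag_esum g L r s / INR N) H) H) with (Off / INR N).
  2:{ unfold Off, Rdiv. rewrite Rmult_comm, <- rsum_scal. apply rsum_ext; intros r _.
      rewrite <- rsum_scal. apply rsum_ext; intros s _. ring. }
  apply Rmult_le_reg_r with (INR N ^ 2); [nra |].
  replace ((Cmod (esum g L) / INR N) ^ 2 * INR N ^ 2) with (Cmod (esum g L) ^ 2) by (field; lra).
  eapply Rle_trans; [apply (weyl_differencing g L H HH) |]. fold Off.
  replace ((2 / INR H + 2 * (Off / INR N / INR H ^ 2) + 8 * (INR H / INR N) ^ 2) * INR N ^ 2)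
    with (2 * INR N ^ 2 / INR H + 2 * INR N / INR H ^ 2 * Off + 8 * INR H ^ 2) by (field; lra).
  apply Rplus_le_compat_r, Rplus_le_compat.
  - unfold Rdiv. apply Rmult_le_compat_r; [apply Rlt_le, Rinv_0_lt_compat; lra |].
    apply Rmult_le_compat_l; [lra |]. apply pow_incr; lra.
  - apply Rmult_le_compat_r; [exact HOff |]. unfold Rdiv.
    apply Rmult_le_compat_r; [apply Rlt_le, Rinv_0_lt_compat; nra | lra].
Qed.

Lemma mean2_pow_le j x H Y : (1 <= H)%nat ->
  (forall r s, (r < H)%nat -> (s < H)%nat -> 0 <= x r s /\ x r s ^ (2 ^ j) <= Y) ->
  0 <= rsum (fun r => rsum (x r) H) H / INR H ^ 2
  /\ (rsum (fun r => rsum (x r) H) H / INR H ^ 2) ^ (2 ^ j) <= Y.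
Proof.
  intros HH Hx. assert (HHr : 0 < INR H ^ (2 ^ j)) by (apply pow_lt, lt_0_INR; lia).
  assert (Hsum : rsum (fun r => rsum (x r) H) H ^ (2 ^ j) <= INR H ^ (2 ^ j) * (INR H ^ (2 ^ j) * Y)).
  { apply rsum_pow_le. intros r Hr. split.
    - apply rsum_nonneg; intros s Hs; apply Hx; auto.
    - apply rsum_pow_le. intros s Hs. apply Hx; auto. }
  split.
  - apply Rdiv_le_0_compat; [| apply pow_lt, lt_0_INR; lia].
    apply rsum_nonneg; intros r Hr; apply rsum_nonneg; intros s Hs; apply Hx; auto.
  - unfold Rdiv. rewrite Rpow_mult_distr, pow_inv, <- pow_mult, Nat.mul_comm, pow_mult.
    apply Rmult_le_reg_r with ((INR H ^ 2 ^ j) ^ 2); [apply pow_lt; lra |].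
    rewrite Rmult_assoc, Rinv_l, Rmult_1_r by (apply pow_nonzero; lra).
    rewrite Rmult_comm. simpl. rewrite Rmult_1_r, Rmult_assoc. exact Hsum.
Qed.

Lemma pow_le_self x n : 0 <= x <= 1 -> (1 <= n)%nat -> x ^ n <= x.
Proof.
  intros Hx Hn. destruct n as [|n]; [lia |]. simpl.
  assert (x ^ n <= 1) by (rewrite <- (pow1 n); apply pow_incr; lra).
  pose proof (pow_le x n (proj1 Hx)). nra.
Qed.

Lemma ratio_sq_pow_le H N B p : 0 <= H <= N -> 0 < N -> H <= B -> (1 <= p)%nat ->
  (8 * (H / N) ^ 2) ^ p <= 8 ^ p * (B / N).
Proof.
  intros HH HN HB Hp.
  assert (0 <= H / N <= 1).
  { split; [apply Rdiv_le_0_compat; lra |].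
    apply Rmult_le_reg_r with N; [lra |]. unfold Rdiv. rewrite Rmult_assoc, Rinv_l; lra. }
  rewrite Rpow_mult_distr, <- pow_mult.
  apply Rmult_le_compat_l; [apply pow_le; lra |].
  eapply Rle_trans; [apply pow_le_self; [auto | lia] |].
  unfold Rdiv. apply Rmult_le_compat_r; [apply Rlt_le, Rinv_0_lt_compat |]; lra.
Qed.

Lemma weyl_step j g L H N B Y :
  (1 <= H <= N)%nat -> (L <= N)%nat -> INR H <= B -> 0 <= Y ->
  (forall r s, (r < H)%nat -> (s < H)%nat -> r <> s ->
     (Cmod (esum (fun n => g (n + r)%nat - g (n + s)%nat) L) / INR N) ^ (2 ^ j) <= Y) ->
  (Cmod (esum g L) / INR N) ^ (2 ^ S j)
    <= 3 ^ (2 ^ j - 1) * 8 ^ (2 ^ j) * ((/ INR H) ^ (2 ^ j) + Y + B / INR N).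
Proof.
  intros [H1 HHN] HL HHB HY Hoff.
  set (p := (2 ^ j)%nat). assert (Hp : (1 <= p)%nat) by (pose proof (Nat.pow_nonzero 2 j); unfold p; lia).
  assert (HHr : 1 <= INR H) by (apply (le_INR 1); auto).
  assert (HNr : INR H <= INR N) by (apply le_INR; auto).
  set (m := rsum (fun r => rsum (fun s => offdiag_esum g L r s / INR N) H) H / INR H ^ 2).
  assert (Hm : 0 <= m /\ m ^ p <= Y).
  { apply mean2_pow_le; auto. intros r s Hr Hs. unfold offdiag_esum.
    destruct (Nat.eq_dec r s) as [_ | Hrs].
    - unfold Rdiv. rewrite Rmult_0_l, pow_i by lia. lra.
    - split; [apply Rdiv_le_0_compat; [apply Cmod_ge_0 | lra] | apply Hoff; auto]. }
  set (c := 8 * (INR H / INR N) ^ 2).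
  assert (Hc : 0 <= c /\ c ^ p <= 8 ^ p * (B / INR N)).
  { split; [unfold c; apply Rmult_le_pos; [lra | apply pow2_ge_0] |].
    apply ratio_sq_pow_le; auto; pose proof (pos_INR H); lra. }
  assert (HX : (Cmod (esum g L) / INR N) ^ 2 <= 2 / INR H + 2 * m + c)
    by (apply weyl_differencing_normalized; lia).
  replace (2 ^ S j)%nat with (2 * p)%nat by (unfold p; rewrite Nat.pow_succ_r'; lia).
  rewrite pow_mult.
  eapply Rle_trans; [apply pow_incr; split; [apply pow2_ge_0 | exact HX] |].
  eapply Rle_trans; [apply pow_sum3_le; [apply Rdiv_le_0_compat | |]; lra |].
  fold p. unfold Rdiv at 1. rewrite !Rpow_mult_distr, Rmult_assoc.
  apply Rmult_le_compat_l; [apply pow_le; lra |].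
  assert (2 ^ p <= 8 ^ p) by (apply pow_incr; lra).
  assert (0 <= (/ INR H) ^ p) by (apply pow_le, Rlt_le, Rinv_0_lt_compat; lra).
  assert (0 <= B / INR N) by (apply Rdiv_le_0_compat; lra).
  assert (2 ^ p * (/ INR H) ^ p <= 8 ^ p * (/ INR H) ^ p) by (apply Rmult_le_compat_r; auto).
  assert (2 ^ p * m ^ p <= 8 ^ p * Y)
    by (apply Rmult_le_compat; [apply pow_le; lra | apply pow_le; tauto | auto | tauto]).
  lra.
Qed.

Fixpoint deg_le (j : nat) (r : nat -> R) : Prop :=
  match j with
  | O => forall n, r n = r O
  | S j' => forall d, deg_le j' (fun n => r (n + d)%nat - r n)
  end.

Lemma deg_le_ext j : forall r s, (forall n, r n = s n) -> deg_le j r -> deg_le j s.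
Proof.
  induction j; simpl; intros r s E Hr.
  - intros n. rewrite <- !E. auto.
  - intros d. eapply IHj; [| apply (Hr d)]. intros n; simpl; rewrite !E; reflexivity.
Qed.

Lemma deg_le_add j : forall r s, deg_le j r -> deg_le j s -> deg_le j (fun n => r n + s n).
Proof.
  induction j; simpl; intros r s Hr Hs.
  - intros n. rewrite Hr, Hs. auto.
  - intros d. eapply deg_le_ext; [| apply (IHj _ _ (Hr d) (Hs d))]. intros; simpl; ring.
Qed.

Lemma deg_le_scal j : forall c r, deg_le j r -> deg_le j (fun n => c * r n).
Proof.
  induction j; simpl; intros c r Hr.
  - intros n. rewrite Hr. auto.
  - intros d. eapply deg_le_ext; [| apply (IHj c _ (Hr d))]. intros; simpl; ring.
Qed.

Lemma deg_le_shift j : forall r s, deg_le j r -> deg_le j (fun n => r (n + s)%nat).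
Proof.
  induction j; simpl; intros r s Hr.
  - intros n. rewrite (Hr (n + s)%nat), (Hr s). auto.
  - intros d. eapply deg_le_ext; [| apply (IHj _ s (Hr d))]. intros; simpl.
    rewrite <- !Nat.add_assoc, (Nat.add_comm d s). reflexivity.
Qed.

Lemma deg_le_S j : forall r, deg_le j r -> deg_le (S j) r.
Proof.
  induction j; simpl; intros r Hr.
  - intros d n. rewrite (Hr (n + d)%nat), (Hr n), (Hr d). ring.
  - intros d. exact (IHj _ (Hr d)).
Qed.

Lemma deg_le_mono i j r : (i <= j)%nat -> deg_le i r -> deg_le j r.
Proof. induction 1; auto using deg_le_S. Qed.

Lemma deg_le_mul_INR j : forall r, deg_le j r -> deg_le (S j) (fun n => INR n * r n).
Proof.
  induction j; intros r Hr.
  - simpl in *. intros d n. rewrite (Hr (n + d)%nat), (Hr n), plus_INR, (Hr d). simpl. ring.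
  - intros d.
    apply deg_le_ext with (fun n => INR n * (r (n + d)%nat - r n) + INR d * r (n + d)%nat).
    { intros n. rewrite plus_INR. ring. }
    apply deg_le_add; [apply IHj, (Hr d) | apply deg_le_scal, deg_le_shift, Hr].
Qed.

Lemma deg_le_pow j : deg_le j (fun n => INR n ^ j).
Proof.
  induction j; [simpl; auto |].
  eapply deg_le_ext; [| apply deg_le_mul_INR, IHj]. intros; simpl; ring.
Qed.

Lemma deg_le_poly j (a : nat -> R) m : (m <= j)%nat ->
  deg_le j (fun n => sum_f_R0 (fun i => a i * INR n ^ i) m).
Proof.
  assert (Hterm : forall i, (i <= j)%nat -> deg_le j (fun n => a i * INR n ^ i))
    by (intros i Hi; apply deg_le_scal, (deg_le_mono i); auto using deg_le_pow).
  induction m; intros Hm; [apply Hterm; lia |].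
  simpl. apply deg_le_add; [apply IHm | apply Hterm]; lia.
Qed.

Lemma binomial_sub_top2 (x y : R) j : (x + y) ^ S (S j) - x ^ S (S j) - INR (S (S j)) * y * x ^ S j
  = sum_f_R0 (fun i => Binomial.C (S (S j)) i * y ^ (S (S j) - i) * x ^ i) j.
Proof.
  rewrite binomial, !tech5, C_n_n, Nat.sub_diag.
  rewrite pascal_step1, Nat.sub_succ_l, Nat.sub_diag, pascal_step3, C_n_0 by lia.
  rewrite (sum_eq _ (fun i => Binomial.C (S (S j)) i * y ^ (S (S j) - i) * x ^ i))
    by (intros; ring).
  replace (S (S j) - S j)%nat with 1%nat by lia. simpl. field.
Qed.

Lemma deg_le_pow_diff j d :
  deg_le j (fun n => (INR n + INR d) ^ S (S j) - INR n ^ S (S j) - INR (S (S j)) * INR d * INR n ^ S j).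
Proof.
  eapply deg_le_ext; [intros n; symmetry; apply binomial_sub_top2 |].
  apply deg_le_poly with (a := fun i => Binomial.C (S (S j)) i * INR d ^ (S (S j) - i)). auto.
Qed.

Definition has_leading_term (j : nat) (c : R) (g : nat -> R) : Prop :=
  exists r, deg_le j r /\ forall n, g n = c * INR n ^ S j + r n.

Lemma has_leading_term_shift j c g s :
  has_leading_term j c g -> has_leading_term j c (fun n => g (n + s)%nat).
Proof.
  intros [r [Hr Hg]].
  exists (fun n => c * (INR (n + s) ^ S j - INR n ^ S j) + r (n + s)%nat). split.
  - apply deg_le_add; [apply deg_le_scal, (deg_le_pow (S j)) | apply deg_le_shift, Hr].
  - intros n. rewrite Hg. ring.
Qed.

Lemma has_leading_term_diff j c g d : has_leading_term (S j) c g ->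
  has_leading_term j (INR (S (S j)) * c * INR d) (fun n => g (n + d)%nat - g n).
Proof.
  intros [r [Hr Hg]].
  exists (fun n => c * ((INR n + INR d) ^ S (S j) - INR n ^ S (S j)
                        - INR (S (S j)) * INR d * INR n ^ S j) + (r (n + d)%nat - r n)).
  split.
  - apply deg_le_add; [apply deg_le_scal, deg_le_pow_diff | apply Hr].
  - intros n. rewrite !Hg, plus_INR. ring.
Qed.

Lemma has_leading_term_poly alpha j h :
  has_leading_term j (INR h * alpha (S j)) (fun n => INR h * poly_eval alpha (S j) (S n)).
Proof.
  exists (fun n => INR h * alpha (S j) * (INR (n + 1) ^ S j - INR n ^ S j)
           + INR h * sum_f_R0 (fun i => alpha i * INR (n + 1) ^ i) j).
  split.
  - apply deg_le_add; apply deg_le_scal; [apply (deg_le_pow (S j)) |].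
    apply (deg_le_shift j (fun n => sum_f_R0 (fun i => alpha i * INR n ^ i) j)).
    apply deg_le_poly; auto.
  - intros n. unfold poly_eval. rewrite tech5, Nat.add_1_r. ring.
Qed.

Definition linear_esum_bound (theta B : R) : Prop :=
  forall b M, Cmod (esum (fun n => theta * INR n + b) M) <= B.

Fixpoint prodn (Hs : list nat) : nat :=
  match Hs with nil => 1%nat | H :: Hs' => (H * prodn Hs')%nat end.

Fixpoint weyl_error (Hs : list nat) : R :=
  match Hs with
  | nil => 0
  | H :: Hs' => (/ INR H) ^ (2 ^ length Hs') + weyl_error Hs'
  end.

Fixpoint weyl_const (j : nat) : R :=
  match j with
  | O => 1
  | S j' => 3 ^ (2 ^ j' - 1) * 8 ^ (2 ^ j') * (1 + weyl_const j')
  end.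

Lemma weyl_error_nonneg Hs : List.Forall (fun H => (1 <= H)%nat) Hs -> 0 <= weyl_error Hs.
Proof.
  induction 1 as [|H Hs HH _ IH]; simpl; [lra |].
  apply (le_INR 1) in HH. simpl in HH.
  assert (0 <= (/ INR H) ^ 2 ^ length Hs) by (apply pow_le, Rlt_le, Rinv_0_lt_compat; lra).
  lra.
Qed.

Lemma weyl_const_nonneg j : 0 <= weyl_const j.
Proof.
  induction j; simpl; [lra |].
  apply Rmult_le_pos; [apply Rmult_le_pos; apply pow_le |]; lra.
Qed.

Lemma prodn_pos Hs : List.Forall (fun H => (1 <= H)%nat) Hs -> (1 <= prodn Hs)%nat.
Proof. induction 1; simpl; nia. Qed.

Lemma Cmod_esum_of_leading_term0 c g B L :
  has_leading_term 0 c g -> linear_esum_bound c B -> Cmod (esum g L) <= B.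
Proof.
  intros [r [Hr Hg]] Hlin.
  rewrite (esum_ext g (fun n => c * INR n + r O)) by (intros n; rewrite Hg, (Hr n); ring).
  apply Hlin.
Qed.

Lemma linear_esum_bound_diff j c B H Hs d : (1 <= d < H)%nat ->
  (forall m, (1 <= m <= fact (S (S j)) * prodn (H :: Hs))%nat -> linear_esum_bound (c * INR m) B) ->
  forall m, (1 <= m <= fact (S j) * prodn Hs)%nat ->
  linear_esum_bound (INR (S (S j)) * c * INR d * INR m) B.
Proof.
  intros Hd Hlin m Hm.
  replace (INR (S (S j)) * c * INR d * INR m) with (c * INR (S (S j) * d * m))
    by (rewrite !mult_INR; ring).
  apply Hlin. change (fact (S (S j))) with (S (S j) * fact (S j))%nat. simpl prodn.
  split; [nia |].
  replace (S (S j) * fact (S j) * (H * prodn Hs))%nat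
    with (S (S j) * H * (fact (S j) * prodn Hs))%nat by ring.
  apply Nat.mul_le_mono; [apply Nat.mul_le_mono_l |]; lia.
Qed.

Lemma Cmod_esum_sub_comm g L r s :
  Cmod (esum (fun n => g (n + r)%nat - g (n + s)%nat) L)
  = Cmod (esum (fun n => g (n + s)%nat - g (n + r)%nat) L).
Proof. rewrite <- Cmod_esum_opp. f_equal. apply esum_ext. intros; ring. Qed.

Lemma weyl_const_S_bound j u E v : 0 <= u -> 0 <= E -> 0 <= v ->
  3 ^ (2 ^ j - 1) * 8 ^ (2 ^ j) * (u + weyl_const j * (E + v) + v)
  <= weyl_const (S j) * (u + E + v).
Proof.
  intros Hu HE Hv. simpl weyl_const.
  set (K3 := 3 ^ (2 ^ j - 1) * 8 ^ 2 ^ j). rewrite Rmult_assoc.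
  apply Rmult_le_compat_l; [apply Rmult_le_pos; apply pow_le; lra |].
  pose proof (weyl_const_nonneg j).
  assert (0 <= weyl_const j * u) by (apply Rmult_le_pos; lra). nra.
Qed.

(* Differencing with shift d < H multiplies the leading coefficient by (j + 2) d, so the j steps
   with lengths Hs produce linear phases with slopes c m, 1 <= m <= (j + 1)! * prodn Hs. *)
Lemma weyl_iteration j : forall g c L Hs B N,
  length Hs = j -> List.Forall (fun H => (1 <= H <= N)%nat) Hs -> INR (prodn Hs) <= B ->
  (L <= N)%nat -> (1 <= N)%nat -> has_leading_term j c g ->
  (forall m, (1 <= m <= fact (S j) * prodn Hs)%nat -> linear_esum_bound (c * INR m) B) ->
  (Cmod (esum g L) / INR N) ^ (2 ^ j) <= weyl_const j * (weyl_error Hs + B / INR N).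
Proof.
  induction j as [|j IH]; intros g c L Hs B N Hlen HHs HB HL HN Hg Hlin.
  - destruct Hs; [| discriminate]. simpl. rewrite Rmult_1_r, Rplus_0_l, Rmult_1_l.
    unfold Rdiv. apply Rmult_le_compat_r; [apply Rlt_le, Rinv_0_lt_compat, lt_0_INR; lia |].
    apply (Cmod_esum_of_leading_term0 c); auto.
    rewrite <- (Rmult_1_r c). apply (Hlin 1%nat). simpl; lia.
  - destruct Hs as [|H Hs]; [discriminate |]. injection Hlen as Hlen.
    apply Forall_cons_iff in HHs as [HH HHs].
    assert (HP := prodn_pos Hs ltac:(eapply Forall_impl; [| exact HHs]; simpl; lia)).
    simpl prodn in HB. rewrite mult_INR in HB.
    assert (HHB : INR H <= B /\ INR (prodn Hs) <= B).
    { apply (le_INR 1) in HP. pose proof (le_INR 1 H (proj1 HH)). simpl in *. nra. }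
    assert (HE : 0 <= weyl_error Hs)
      by (apply weyl_error_nonneg; eapply Forall_impl; [| exact HHs]; simpl; lia).
    assert (Hv : 0 <= B / INR N)
      by (apply Rdiv_le_0_compat; [pose proof (pos_INR H); lra | apply lt_0_INR; lia]).
    set (Y := weyl_const j * (weyl_error Hs + B / INR N)).
    assert (Hdiff : forall r s, (s < r < H)%nat ->
      (Cmod (esum (fun n => g (n + r)%nat - g (n + s)%nat) L) / INR N) ^ (2 ^ j) <= Y).
    { intros r s Hrs. set (d := (r - s)%nat).
      rewrite (esum_ext _ (fun n => g (n + d + s)%nat - g (n + s)%nat))
        by (intros n; replace (n + d + s)%nat with (n + r)%nat by (unfold d; lia); reflexivity).
      apply (IH _ (INR (S (S j)) * c * INR d) L Hs B N); try tauto.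
      - apply (has_leading_term_diff j c (fun m => g (m + s)%nat) d), has_leading_term_shift, Hg.
      - apply (linear_esum_bound_diff j c B H); [unfold d; lia | exact Hlin]. }
    eapply Rle_trans; [apply (weyl_step j g L H N B Y); try tauto |].
    + apply Rmult_le_pos; [apply weyl_const_nonneg | lra].
    + intros r s Hr Hs' Hrs. assert (Hcmp : (r < s \/ s < r)%nat) by lia.
      destruct Hcmp; [rewrite Cmod_esum_sub_comm |]; apply Hdiff; lia.
    + simpl weyl_error. rewrite Hlen. apply weyl_const_S_bound; auto.
      apply pow_le, Rlt_le, Rinv_0_lt_compat, lt_0_INR. lia.
Qed.

Lemma sin_PI_ge t d : 0 < d <= 1 / 2 -> d <= t <= 1 - d -> d <= sin (PI * t).
Proof.
  intros Hd Ht. pose proof PI_4. pose proof PI2_3_2.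
  assert (Hhalf : forall u, d <= u <= 1 / 2 -> d <= sin (PI * u)).
  { intros u Hu. set (y := PI * u). assert (Hy : 0 <= y <= 2) by (unfold y; nra).
    (* sin y >= y - y^3/6 >= y/3 for 0 <= y <= 2 *)
    destruct (sin_bound y 0) as [Hlb _]; [lra | unfold y; nra |].
    unfold sin_approx, sin_term in Hlb. simpl in Hlb.
    assert (u <= y / 3) by (unfold y; nra).
    nra. }
  destruct (Rle_dec t (1 / 2)); [apply Hhalf; lra |].
  replace (PI * t) with (PI - PI * (1 - t)) by ring. rewrite sin_PI_x. apply Hhalf; lra.
Qed.

Lemma cos_periodZ x z : cos (x + 2 * IZR z * PI) = cos x.
Proof.
  destruct z as [|p|p].
  - f_equal. ring.
  - replace (IZR (Z.pos p)) with (INR (Pos.to_nat p))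
      by (rewrite INR_IZR_INZ, positive_nat_Z; reflexivity).
    apply cos_period.
  - replace (IZR (Z.neg p)) with (- INR (Pos.to_nat p))
      by (rewrite INR_IZR_INZ, positive_nat_Z; reflexivity).
    rewrite <- (cos_period _ (Pos.to_nat p)). f_equal. ring.
Qed.

Lemma Cmod_1_sub_e_sq theta : Cmod (1 - e theta)%C ^ 2 = 2 - 2 * cos (2 * PI * theta).
Proof.
  rewrite Cmod2_alt. unfold e. simpl.
  pose proof (sin2_cos2 (2 * PI * theta)) as E. unfold Rsqr in E. nra.
Qed.

Lemma esum_linear_mul (theta b : R) M :
  (esum (fun n => (theta * INR n + b)%R) M * (1 - e theta))%C = (e b - e (theta * INR M + b)%R)%C.
Proof.
  induction M as [|M IH].
  - unfold esum; simpl. rewrite Rmult_0_r, Rplus_0_l. ring.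
  - unfold esum in *. cbn [csum]. rewrite Cmult_plus_distr_r, IH, S_INR.
    replace (theta * (INR M + 1) + b) with (theta * INR M + b + theta) by ring.
    rewrite <- (e_add (theta * INR M + b) theta). ring.
Qed.

Lemma Cmod_1_sub_e_ge theta d : 0 < d <= 1 / 2 -> (forall z, d <= Rabs (theta - IZR z)) ->
  2 * d <= Cmod (1 - e theta)%C.
Proof.
  intros Hd Hz.
  set (z := Int_part theta). set (t := theta - IZR z).
  destruct (base_Int_part theta) as [B1 B2]. fold z in B1, B2.
  assert (Ht : d <= t <= 1 - d).
  { split.
    - specialize (Hz z). rewrite Rabs_right in Hz; unfold t; lra.
    - specialize (Hz (z + 1)%Z). rewrite plus_IZR, Rabs_left1 in Hz; unfold t; lra. }
  assert (Hw : (2 * d) ^ 2 <= Cmod (1 - e theta)%C ^ 2).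
  { rewrite Cmod_1_sub_e_sq.
    replace (2 * PI * theta) with (2 * (PI * t) + 2 * IZR z * PI) by (unfold t; ring).
    rewrite cos_periodZ, cos_2a_sin.
    pose proof (sin_PI_ge t d Hd Ht). nra. }
  apply Rsqr_incr_0_var; [rewrite !Rsqr_pow2; exact Hw | apply Cmod_ge_0].
Qed.

Lemma Cmod_esum_linear_le theta b M d : 0 < d <= 1 / 2 -> (forall z, d <= Rabs (theta - IZR z)) ->
  Cmod (esum (fun n => theta * INR n + b) M) <= / d.
Proof.
  intros Hd Hz. pose proof (Cmod_1_sub_e_ge theta d Hd Hz).
  assert (Hprod : Cmod (esum (fun n => theta * INR n + b) M) * Cmod (1 - e theta)%C <= 2).
  { rewrite <- Cmod_mult, esum_linear_mul. unfold Cminus.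
    eapply Rle_trans; [apply Cmod_triangle |]. rewrite Cmod_opp, !Cmod_e. lra. }
  pose proof (Cmod_ge_0 (esum (fun n => theta * INR n + b) M)).
  apply Rmult_le_reg_r with (2 * d); [lra |].
  replace (/ d * (2 * d)) with 2 by (field; lra). nra.
Qed.

Lemma dist_Z_mul_ge (a : R) (p : Z) (q m : nat) : (0 < q)%nat -> Z.gcd p (Z.of_nat q) = 1%Z ->
  Rabs (a - IZR p / INR q) <= 1 / INR q ^ 2 -> (1 <= m)%nat -> (2 * m <= q)%nat ->
  forall z, / (2 * INR q) <= Rabs (a * INR m - IZR z).
Proof.
  intros Hq Hg Ha Hm1 Hm2 z.
  (* a m - z = (m p - z q) / q + m (a - p / q), and q does not divide m p *)
  set (k := (Z.of_nat m * p - z * Z.of_nat q)%Z).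
  assert (Hk : (1 <= Rabs (IZR k))).
  { rewrite <- abs_IZR. apply IZR_le.
    enough (k <> 0%Z) by lia. intros E.
    assert (D : (Z.of_nat q | p * Z.of_nat m)%Z) by (exists z; unfold k in E; lia).
    apply Z.gauss in D; [| rewrite Z.gcd_comm; auto].
    apply Z.divide_pos_le in D; lia. }
  assert (HQ : 0 < INR q) by (apply lt_0_INR; auto).
  assert (HQm : 2 * INR m <= INR q)
    by (replace 2 with (INR 2) by reflexivity; rewrite <- mult_INR; apply le_INR; auto).
  set (X := IZR k / INR q). set (Y := INR m * (a - IZR p / INR q)).
  assert (E : a * INR m - IZR z = X - - Y).
  { unfold X, Y, k. rewrite minus_IZR, !mult_IZR, <- !INR_IZR_INZ. field. lra. }
  assert (HX : / INR q <= Rabs X).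
  { unfold X. rewrite Rabs_div, (Rabs_right (INR q)) by lra.
    unfold Rdiv. rewrite <- (Rmult_1_l (/ INR q)) at 1.
    apply Rmult_le_compat_r; [apply Rlt_le, Rinv_0_lt_compat |]; lra. }
  assert (HY : Rabs Y <= / (2 * INR q)).
  { unfold Y. rewrite Rabs_mult, (Rabs_right (INR m)) by (apply Rle_ge, pos_INR).
    eapply Rle_trans; [apply Rmult_le_compat_l; [apply pos_INR | apply Ha] |].
    apply Rmult_le_reg_r with (2 * INR q ^ 2); [nra |].
    replace (INR m * (1 / INR q ^ 2) * (2 * INR q ^ 2)) with (2 * INR m) by (field; lra).
    replace (/ (2 * INR q) * (2 * INR q ^ 2)) with (INR q) by (field; lra). lra. }
  rewrite E. pose proof (Rabs_triang_inv X (- Y)) as Htri. rewrite Rabs_Ropp in Htri.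
  assert (/ INR q = 2 * / (2 * INR q)) by (field; lra). lra.
Qed.

Section DifferencingLengths.

Variable Rr : nat.
Hypothesis HR : (1 <= Rr)%nat.

Definition pow2_root (e : nat) : R := Rpower (INR Rr) (/ 2 ^ e).

Definition diff_length (e : nat) : nat := Z.to_nat (Int_part (pow2_root e)).

Fixpoint diff_lengths (j : nat) : list nat :=
  match j with O => nil | S j' => diff_length j' :: diff_lengths j' end.

Lemma pow2_root_bounds e : 1 <= pow2_root e <= INR Rr.
Proof.
  assert (HRr : 1 <= INR Rr) by (apply (le_INR 1); auto).
  assert (1 <= 2 ^ e) by (apply pow_R1_Rle; lra).
  assert (0 < / 2 ^ e <= 1)
    by (split; [apply Rinv_0_lt_compat; lra | rewrite <- Rinv_1; apply Rinv_le_contravar; lra]).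
  unfold pow2_root. split.
  - rewrite <- (Rpower_O (INR Rr)) by lra. apply Rle_Rpower; lra.
  - rewrite <- (Rpower_1 (INR Rr)) at 2 by lra. apply Rle_Rpower; lra.
Qed.

Lemma pow2_root_pow e : pow2_root e ^ (2 ^ e) = INR Rr.
Proof.
  destruct (pow2_root_bounds e).
  rewrite <- Rpower_pow by lra. unfold pow2_root.
  rewrite Rpower_mult, pow_INR, Rinv_l, Rpower_1; auto.
  - apply (lt_INR 0); auto.
  - apply pow_nonzero. simpl. lra.
Qed.

Lemma diff_length_bounds e :
  (1 <= diff_length e)%nat /\ INR (diff_length e) <= pow2_root e < INR (diff_length e) + 1.
Proof.
  destruct (pow2_root_bounds e). destruct (base_Int_part (pow2_root e)) as [B1 B2].
  assert (Hz : (0 < Int_part (pow2_root e))%Z) by (apply lt_IZR; lra).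
  assert (E : INR (diff_length e) = IZR (Int_part (pow2_root e)))
    by (unfold diff_length; rewrite INR_IZR_INZ, Z2Nat.id by lia; reflexivity).
  rewrite E. split; [unfold diff_length; lia | lra].
Qed.

Lemma inv_diff_length_pow e : (/ INR (diff_length e)) ^ (2 ^ e) <= 2 ^ (2 ^ e) / INR Rr.
Proof.
  destruct (diff_length_bounds e) as [H1 [H2 H3]]. destruct (pow2_root_bounds e).
  assert (HH : 1 <= INR (diff_length e)) by (apply (le_INR 1); auto).
  assert (L1 : / INR (diff_length e) <= 2 / pow2_root e).
  { apply Rmult_le_reg_r with (pow2_root e * INR (diff_length e)); [nra |].
    replace (/ INR (diff_length e) * (pow2_root e * INR (diff_length e))) with (pow2_root e) by (field; lra).
    replace (2 / pow2_root e * (pow2_root e * INR (diff_length e))) with (2 * INR (diff_length e))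
      by (field; lra).
    lra. }
  eapply Rle_trans; [apply pow_incr; split; [apply Rlt_le, Rinv_0_lt_compat; lra | exact L1] |].
  unfold Rdiv. rewrite Rpow_mult_distr, pow_inv, pow2_root_pow. lra.
Qed.

Lemma length_diff_lengths j : length (diff_lengths j) = j.
Proof. induction j; simpl; auto. Qed.

Lemma diff_lengths_bounds j N : (Rr <= N)%nat ->
  List.Forall (fun H => (1 <= H <= N)%nat) (diff_lengths j).
Proof.
  intros HN. induction j; simpl; constructor; auto.
  destruct (diff_length_bounds j) as [H1 [H2 _]]. destruct (pow2_root_bounds j).
  split; auto. apply INR_le. apply le_INR in HN. lra.
Qed.

Lemma weyl_error_diff_lengths j : weyl_error (diff_lengths j) <= rsum (fun e => 2 ^ (2 ^ e)) j / INR Rr.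
Proof.
  induction j; simpl weyl_error; cbn [rsum].
  - unfold Rdiv. lra.
  - rewrite length_diff_lengths. pose proof (inv_diff_length_pow j). unfold Rdiv in *. lra.
Qed.

Lemma prodn_diff_lengths j : INR (prodn (diff_lengths j)) <= Rpower (INR Rr) (2 - 2 / 2 ^ j).
Proof.
  assert (HRr : 1 <= INR Rr) by (apply (le_INR 1); auto).
  induction j; cbn [diff_lengths prodn].
  - simpl. replace (2 - 2 / 1) with 0 by field. rewrite Rpower_O; lra.
  - rewrite mult_INR.
    replace (2 - 2 / 2 ^ S j) with (/ 2 ^ j + (2 - 2 / 2 ^ j))
      by (simpl; field; apply pow_nonzero; lra).
    rewrite Rpower_plus. destruct (diff_length_bounds j) as [_ [H2 _]].
    apply Rmult_le_compat; auto using pos_INR.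
Qed.

End DifferencingLengths.

Lemma linear_esum_bound_of_approx (a : R) (p : Z) (q h M : nat) :
  (0 < q)%nat -> Z.gcd p (Z.of_nat q) = 1%Z -> Rabs (a - IZR p / INR q) <= 1 / INR q ^ 2 ->
  (0 < h)%nat -> (2 * (h * M) <= q)%nat ->
  forall m, (1 <= m <= M)%nat -> linear_esum_bound (INR h * a * INR m) (2 * INR q).
Proof.
  intros Hq Hg Ha Hh HM m Hm b L.
  assert (HQ : 1 <= INR q) by (apply (le_INR 1); auto).
  replace (INR h * a * INR m) with (a * INR (h * m)) by (rewrite mult_INR; ring).
  replace (2 * INR q) with (/ / (2 * INR q)) by (rewrite Rinv_inv; reflexivity).
  apply Cmod_esum_linear_le; [| apply (dist_Z_mul_ge a p q); auto; nia].
  split; [apply Rinv_0_lt_compat; lra |].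
  unfold Rdiv. rewrite Rmult_1_l. apply Rinv_le_contravar; lra.
Qed.

Lemma root_le_of_pow_le X Z K n : 0 <= X -> 0 < Z -> 1 <= K -> (1 <= n)%nat -> X ^ n <= K * Z ->
  X <= K * Rpower Z (1 / INR n).
Proof.
  intros HX HZ HK Hn H. set (y := INR n). assert (Hy : 1 <= y) by (apply (le_INR 1); auto).
  assert (0 < Rpower Z (1 / y)) by apply exp_pos.
  destruct (Req_dec X 0) as [E | E]; [rewrite E; nra |].
  rewrite <- Rpower_pow in H by lra. fold y in H.
  replace X with (Rpower (Rpower X y) (1 / y)) at 1
    by (rewrite Rpower_mult; replace (y * (1 / y)) with 1 by (field; lra); apply Rpower_1; lra).
  eapply Rle_trans.
  { apply Rle_Rpower_l; [apply Rlt_le, Rdiv_lt_0_compat; lra | split; [apply exp_pos | exact H]]. }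
  rewrite <- Rpower_mult_distr by lra.
  apply Rmult_le_compat_r; [lra |].
  rewrite <- (Rpower_1 K) at 2 by lra. apply Rle_Rpower; auto.
  apply Rmult_le_reg_r with y; [lra |]. replace (1 / y * y) with 1 by (field; lra). lra.
Qed.

Lemma weyl_exponent j : 2 - 1 / Rpower 2 (INR (S j) - 2) = 2 - 2 / 2 ^ j.
Proof.
  rewrite S_INR. replace (INR j + 1 - 2) with (INR j + - (1)) by ring.
  rewrite Rpower_plus, Rpower_Ropp, Rpower_1, Rpower_pow by lra.
  field. apply pow_nonzero. lra.
Qed.

Lemma diff_lengths_prodn_le j Rr q h : (1 <= Rr)%nat ->
  2 * INR h * INR (fact (S j)) * Rpower (INR Rr) (2 - 2 / 2 ^ j) <= INR q ->
  (2 * (h * (fact (S j) * prodn (diff_lengths Rr j))) <= q)%nat.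
Proof.
  intros HR Hcond. apply INR_le. rewrite !mult_INR. eapply Rle_trans; [| exact Hcond].
  pose proof (prodn_diff_lengths Rr HR j).
  assert (0 <= 2 * INR h * INR (fact (S j)))
    by (pose proof (pos_INR h); pose proof (pos_INR (fact (S j))); nra).
  simpl (INR 2). nra.
Qed.

Definition weyl_bound_const (j : nat) : R :=
  weyl_const j * (rsum (fun e => 2 ^ (2 ^ e)) j + 2) + 1.

Lemma weyl_bound_const_ge1 j : 1 <= weyl_bound_const j.
Proof.
  unfold weyl_bound_const. pose proof (weyl_const_nonneg j).
  assert (0 <= rsum (fun e => 2 ^ (2 ^ e)) j) by (apply rsum_nonneg; intros; apply pow_le; lra).
  nra.
Qed.

Lemma weyl_error_diff_lengths_le j Rr q N : (1 <= Rr <= N)%nat ->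
  weyl_const j * (weyl_error (diff_lengths Rr j) + 2 * INR q / INR N)
  <= weyl_bound_const j * (/ INR Rr + INR q / INR N).
Proof.
  intros HR. unfold weyl_bound_const. set (Cj := rsum (fun e => 2 ^ (2 ^ e)) j).
  assert (HCj : 0 <= Cj) by (apply rsum_nonneg; intros; apply pow_le; lra).
  assert (HRr : 1 <= INR Rr) by (apply (le_INR 1); lia).
  assert (HNr : INR Rr <= INR N) by (apply le_INR; lia).
  assert (0 < / INR Rr) by (apply Rinv_0_lt_compat; lra).
  assert (0 <= INR q / INR N) by (apply Rdiv_le_0_compat; [apply pos_INR | lra]).
  assert (HE := weyl_error_diff_lengths Rr ltac:(lia) j). fold Cj in HE.
  assert (HK := weyl_const_nonneg j).
  assert (weyl_error (diff_lengths Rr j) + 2 * INR q / INR N <= (Cj + 2) * (/ INR Rr + INR q / INR N))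
    by (unfold Rdiv in *; nra).
  assert (0 <= weyl_const j * (Cj + 2) * (/ INR Rr + INR q / INR N)) by (apply Rmult_le_pos; nra).
  eapply Rle_trans; [apply Rmult_le_compat_l; eauto |]. nra.
Qed.

Theorem proposition1 :
  forall k : nat, (1 <= k)%nat ->
  exists Ck : R,
  forall (alpha : nat -> R) (q Rr h : nat) (p : Z) (N : nat),
    alpha k <> 0 ->
    (0 < q)%nat -> (0 < Rr)%nat -> (0 < h)%nat ->
    Z.gcd p (Z.of_nat q) = 1%Z ->
    Rabs (alpha k - IZR p / INR q) <= 1 / (INR q ^ 2) ->
    2 * INR h * INR (fact k) * Rpower (INR Rr) (2 - 1 / Rpower 2 (INR k - 2)) <= INR q ->
    (Rr <= N)%nat ->
    / INR N * Cmod (expsum (fun n => INR h * poly_eval alpha k n) N)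
      <= Ck * Rpower (/ INR Rr + INR q / INR N) (1 / 2 ^ (k - 1)).
Proof.
  intros k Hk. destruct k as [|j]; [lia |]. replace (S j - 1)%nat with j by lia.
  exists (weyl_bound_const j).
  intros alpha q Rr h p N _ Hq HR Hh Hg Ha Hcond HRN.
  rewrite weyl_exponent in Hcond. set (Hs := diff_lengths Rr j).
  assert (Hprod : (2 * (h * (fact (S j) * prodn Hs)) <= q)%nat)
    by (apply diff_lengths_prodn_le; auto).
  assert (HB : INR (prodn Hs) <= 2 * INR q).
  { assert (1 <= h * fact (S j))%nat by (pose proof (lt_O_fact (S j)); nia).
    apply Rle_trans with (INR q); [apply le_INR; nia | pose proof (pos_INR q); lra]. }
  assert (Hiter := weyl_iteration j _ _ N Hs (2 * INR q) N (length_diff_lengths Rr j)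
                     (diff_lengths_bounds Rr HR j N HRN) HB (le_n N) ltac:(lia)
                     (has_leading_term_poly alpha j h)
                     (linear_esum_bound_of_approx (alpha (S j)) p q h _ Hq Hg Ha Hh Hprod)).
  rewrite expsum_esum, Rmult_comm. change (Cmod ?x * / INR N) with (Cmod x / INR N).
  replace (2 ^ j) with (INR (2 ^ j)) by (rewrite pow_INR; reflexivity).
  apply root_le_of_pow_le; [| | apply weyl_bound_const_ge1 | pose proof (Nat.pow_nonzero 2 j); lia |].
  - apply Rdiv_le_0_compat; [apply Cmod_ge_0 | apply lt_0_INR; lia].
  - apply Rplus_lt_le_0_compat; [apply Rinv_0_lt_compat, lt_0_INR; lia |].
    apply Rdiv_le_0_compat; [apply pos_INR | apply lt_0_INR; lia].
  - eapply Rle_trans; [exact Hiter | apply weyl_error_diff_lengths_le; lia].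
Qed.
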